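(* Let $a:\mathbb{R}\to\mathbb{R}$ be smooth with $a'(u)\neq 0$, let $h$ satisfy $h''=a$, and let $\alpha,\beta\in\mathbb{R}$. Define $$c=\frac{\alpha}{a'},\qquad p=\frac{\beta}{2a'}-\frac{3\alpha^2}{10}\frac{a''}{(a')^3},$$ $$s=\alpha^2\left(\frac{2}{5}\frac{(a'')^3}{(a')^5}-\frac{7}{20}\frac{a''a'''}{(a')^4}+\frac{1}{24}\frac{a''''}{(a')^3}\right)-\frac{\beta}{12}\left(\frac{(a'')^2}{(a')^3}-\frac{a'''}{(a')^2}\right),$$ all evaluated at $u$. Let $$\tilde h=h-\frac{\varepsilon^2}{2}c\,h'''u_x^2+\varepsilon^4\Big[\Big(p\,h'''+\tfrac{3}{10}c^2h^{(4)}\Big)u_{xx}^2-\Big(\tfrac{c\,c''}{8}h^{(4)}+\tfrac{c\,c'}{8}h^{(5)}+\tfrac{c^2}{24}h^{(6)}+\tfrac{p'}{6}h^{(4)}+\tfrac{p}{6}h^{(5)}-s\,h'''\Big)u_x^4\Big]$$ and $\tilde H=\int\tilde h(u,u_x,u_{xx};\varepsilon)\,dx$. Then the Hamiltonian equation $$u_t=\partial_x\frac{\delta\tilde H}{\delta u(x)}$$ coincides with $$u_t=a(u)\,u_x+\varepsilon^2\alpha\,u_{xxx}+\varepsilon^4\beta\,u_{xxxxx}.$$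
   Context: Primes on $a,c,p,h$ denote derivatives with respect to $u$. For a local functional $H=\int h(u,u_x,u_{xx},\dots)\,dx$, the variational derivative is $\frac{\delta H}{\delta u(x)}=\sum_{k\geq 0}(-1)^k\frac{d^k}{dx^k}\frac{\partial h}{\partial u^{(k)}_x}$, where $u^{(k)}_x$ is the $k$-th $x$-derivative of $u$ and $\frac{d}{dx}$ is the total $x$-derivative. The identity is meant as an identity of differential polynomials (rational in $u$-dependence) in each power of $\varepsilon$. *)

From Stdlib Require Import Reals ClassicalEpsilon.
Open Scope R_scope.

(* Derivative operator: the derivative of f at x if it exists (it is unique),
   chosen by classical epsilon; an arbitrary value otherwise. *)
Definition Deriv (f : R -> R) (x : R) : R :=
  epsilon (inhabits 0) (fun l => derivable_pt_lim f x l).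

Definition Dn (n : nat) (f : R -> R) : R -> R := Nat.iter n Deriv f.

Definition Differentiable (f : R -> R) : Prop :=
  forall x, exists l, derivable_pt_lim f x l.

Definition Smooth (f : R -> R) : Prop :=
  forall n : nat, Differentiable (Dn n f).

Definition cfun (a : R -> R) (alpha : R) (u : R) : R :=
  alpha / Dn 1 a u.

Definition pfun (a : R -> R) (alpha beta : R) (u : R) : R :=
  beta / (2 * Dn 1 a u)
  - 3 * alpha ^ 2 / 10 * (Dn 2 a u / (Dn 1 a u) ^ 3).

Definition sfun (a : R -> R) (alpha beta : R) (u : R) : R :=
  alpha ^ 2 * (2 / 5 * ((Dn 2 a u) ^ 3 / (Dn 1 a u) ^ 5)
               - 7 / 20 * (Dn 2 a u * Dn 3 a u / (Dn 1 a u) ^ 4)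
               + 1 / 24 * (Dn 4 a u / (Dn 1 a u) ^ 3))
  - beta / 12 * ((Dn 2 a u) ^ 2 / (Dn 1 a u) ^ 3 - Dn 3 a u / (Dn 1 a u) ^ 2).

(* The density h~(u, u_x, u_xx; eps); v stands for u_x, w for u_xx. *)
Definition htilde (a h : R -> R) (alpha beta : R) (u v w eps : R) : R :=
  let c := cfun a alpha in
  let p := pfun a alpha beta in
  let s := sfun a alpha beta in
  h u
  - eps ^ 2 / 2 * c u * Dn 3 h u * v ^ 2
  + eps ^ 4 * ( (p u * Dn 3 h u + 3 / 10 * (c u) ^ 2 * Dn 4 h u) * w ^ 2
              - ( c u * Dn 2 c u / 8 * Dn 4 h u
                + c u * Dn 1 c u / 8 * Dn 5 h u
                + (c u) ^ 2 / 24 * Dn 6 h u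
                + Dn 1 p u / 6 * Dn 4 h u
                + p u / 6 * Dn 5 h u
                - s u * Dn 3 h u) * v ^ 4 ).

(* Variational derivative of H~ = \int h~ dx evaluated along the function U, at x:
   d h~/du - d/dx (d h~/du_x) + d^2/dx^2 (d h~/du_xx). *)
Definition varder (a h : R -> R) (alpha beta eps : R) (U : R -> R) (x : R) : R :=
  let ht := htilde a h alpha beta in
  Deriv (fun u0 => ht u0 (Dn 1 U x) (Dn 2 U x) eps) (U x)
  - Deriv (fun y => Deriv (fun v0 => ht (U y) v0 (Dn 2 U y) eps) (Dn 1 U y)) x
  + Dn 2 (fun y => Deriv (fun w0 => ht (U y) (Dn 1 U y) w0 eps) (Dn 2 U y)) x.

(* The density h~ collapses, once h'' = a is used, to the quadratic density
     h(u) - eps^2 alpha/2 u_x^2 + eps^4 beta/2 u_xx^2 :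
   indeed c h''' = alpha, p h''' + 3/10 c^2 h'''' = beta/2, and the whole
   coefficient of u_x^4 vanishes identically after expanding c', c'', p'
   in terms of the derivatives of a.  The Euler-Lagrange expression of such
   a quadratic density is h'(u) + eps^2 alpha u_xx + eps^4 beta u_xxxx, and
   its x-derivative is a(u) u_x + eps^2 alpha u_xxx + eps^4 beta u_xxxxx. *)

From Stdlib Require Import Reals ClassicalEpsilon FunctionalExtensionality.
From Coquelicot Require Import Coquelicot.
Open Scope R_scope.

Lemma Deriv_is (f : R -> R) (x l : R) : is_derive f x l -> Deriv f x = l.
Proof.
  intro Hl; apply is_derive_Reals in Hl; unfold Deriv.
  apply (uniqueness_limite f x); [| exact Hl].
  apply (epsilon_spec (inhabits 0) (fun l => derivable_pt_lim f x l)).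
  now exists l.
Qed.

Lemma Deriv_ext (f g : R -> R) (x : R) :
  (forall y, f y = g y) -> Deriv f x = Deriv g x.
Proof. intro Hfg; now rewrite (functional_extensionality _ _ Hfg). Qed.

Lemma differentiable_is_derive (f : R -> R) (y : R) :
  Differentiable f -> is_derive f y (Deriv f y).
Proof.
  intro Hf; destruct (Hf y) as [l Hl].
  rewrite (Deriv_is f y l) by now apply is_derive_Reals.
  now apply is_derive_Reals.
Qed.

Lemma Deriv_scal (f : R -> R) (k x : R) :
  Differentiable f -> Deriv (fun y => k * f y) x = k * Deriv f x.
Proof.
  intro Hf; apply Deriv_is, is_derive_scal, differentiable_is_derive, Hf.
Qed.

Lemma smooth_is_derive (f : R -> R) (k : nat) (y : R) :
  Smooth f -> is_derive (Dn k f) y (Dn (S k) f y).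
Proof. intro Hf; exact (differentiable_is_derive (Dn k f) y (Hf k)). Qed.

(* Derivatives of the quotients defining c and p, for an abstract chain
   a1' = a2, a2' = a3 with a1 nowhere zero; they are applied below with
   a1, a2, a3 the first three derivatives of a. *)
Section QuotientDerivatives.

Variables (a1 a2 a3 : R -> R) (alpha beta : R).
Hypothesis Ha12 : forall y, is_derive a1 y (a2 y).
Hypothesis Ha23 : forall y, is_derive a2 y (a3 y).
Hypothesis Ha1 : forall y, a1 y <> 0.

Ltac chain_derive :=
  auto_derive;
  [ repeat first [ exact I | eexists; apply Ha12 | eexists; apply Ha23
                 | apply Ha1 | apply Rmult_integral_contrapositive_currified
                 | apply R1_neq_R0 | solve [discrR] | split ]
  | rewrite ?(is_derive_unique _ _ _ (Ha12 _)), ?(is_derive_unique _ _ _ (Ha23 _));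
    field; apply Ha1 ].

Lemma is_derive_c (u : R) :
  is_derive (fun y => alpha / a1 y) u (- alpha * a2 u / (a1 u) ^ 2).
Proof. chain_derive. Qed.

Lemma is_derive_c' (u : R) :
  is_derive (fun y => - alpha * a2 y / (a1 y) ^ 2) u
    (- alpha * a3 u / (a1 u) ^ 2 + 2 * alpha * (a2 u) ^ 2 / (a1 u) ^ 3).
Proof. chain_derive. Qed.

Lemma is_derive_p (u : R) :
  is_derive (fun y => beta / (2 * a1 y) - 3 * alpha ^ 2 / 10 * (a2 y / (a1 y) ^ 3)) u
    (- beta * a2 u / (2 * (a1 u) ^ 2)
     - 3 * alpha ^ 2 / 10 * (a3 u / (a1 u) ^ 3 - 3 * (a2 u) ^ 2 / (a1 u) ^ 4)).
Proof. chain_derive. Qed.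

End QuotientDerivatives.

Section CoefficientDerivatives.

Variables (a : R -> R) (alpha beta : R).
Hypothesis Ha : Smooth a.
Hypothesis Ha1 : forall u, Dn 1 a u <> 0.

Let Ha12 (y : R) : is_derive (Dn 1 a) y (Dn 2 a y) := smooth_is_derive a 1 y Ha.
Let Ha23 (y : R) : is_derive (Dn 2 a) y (Dn 3 a y) := smooth_is_derive a 2 y Ha.

Lemma cfun_D1 (u : R) :
  Dn 1 (cfun a alpha) u = - alpha * Dn 2 a u / (Dn 1 a u) ^ 2.
Proof. apply Deriv_is, (is_derive_c _ _ _ Ha12 Ha1). Qed.

Lemma cfun_D2 (u : R) :
  Dn 2 (cfun a alpha) u =
  - alpha * Dn 3 a u / (Dn 1 a u) ^ 2
  + 2 * alpha * (Dn 2 a u) ^ 2 / (Dn 1 a u) ^ 3.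
Proof.
  change (Dn 2 (cfun a alpha) u) with (Deriv (Dn 1 (cfun a alpha)) u).
  rewrite (Deriv_ext _ _ u cfun_D1).
  apply Deriv_is, (is_derive_c' _ _ _ _ Ha12 Ha23 Ha1).
Qed.

Lemma pfun_D1 (u : R) :
  Dn 1 (pfun a alpha beta) u =
  - beta * Dn 2 a u / (2 * (Dn 1 a u) ^ 2)
  - 3 * alpha ^ 2 / 10
    * (Dn 3 a u / (Dn 1 a u) ^ 3 - 3 * (Dn 2 a u) ^ 2 / (Dn 1 a u) ^ 4).
Proof. apply Deriv_is, (is_derive_p _ _ _ _ _ Ha12 Ha23 Ha1). Qed.

End CoefficientDerivatives.

Lemma Dn_shift (h a : R -> R) :
  (forall u, Dn 2 h u = a u) -> forall n, Dn (n + 2) h = Dn n a.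
Proof.
  intros Hh2 n; induction n as [| n IHn].
  - exact (functional_extensionality _ _ Hh2).
  - change (Deriv (Dn (n + 2) h) = Deriv (Dn n a)); now rewrite IHn.
Qed.

Definition quadratic_density (F : R -> R) (k m : R) (u v w : R) : R :=
  F u - k / 2 * v ^ 2 + m / 2 * w ^ 2.

Lemma htilde_quadratic (a h : R -> R) (alpha beta : R) :
  Smooth a -> (forall u, Dn 1 a u <> 0) -> (forall u, Dn 2 h u = a u) ->
  forall u v w eps, htilde a h alpha beta u v w eps =
    quadratic_density h (eps ^ 2 * alpha) (eps ^ 4 * beta) u v w.
Proof.
  intros Ha Ha1 Hh2 u v w eps; unfold htilde, quadratic_density.
  rewrite (Dn_shift h a Hh2 1 : Dn 3 h = Dn 1 a),
          (Dn_shift h a Hh2 2 : Dn 4 h = Dn 2 a),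
          (Dn_shift h a Hh2 3 : Dn 5 h = Dn 3 a),
          (Dn_shift h a Hh2 4 : Dn 6 h = Dn 4 a).
  rewrite (cfun_D1 a alpha Ha Ha1), (cfun_D2 a alpha Ha Ha1),
          (pfun_D1 a alpha beta Ha Ha1).
  unfold cfun, pfun, sfun; field; apply Ha1.
Qed.

Definition euler_lagrange (L : R -> R -> R -> R) (U : R -> R) (x : R) : R :=
  Deriv (fun u0 => L u0 (Dn 1 U x) (Dn 2 U x)) (U x)
  - Deriv (fun y => Deriv (fun v0 => L (U y) v0 (Dn 2 U y)) (Dn 1 U y)) x
  + Dn 2 (fun y => Deriv (fun w0 => L (U y) (Dn 1 U y) w0) (Dn 2 U y)) x.

Lemma varder_euler_lagrange (a h : R -> R) (alpha beta eps : R) (U : R -> R) :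
  varder a h alpha beta eps U =
  euler_lagrange (fun u v w => htilde a h alpha beta u v w eps) U.
Proof. reflexivity. Qed.

Section QuadraticPartials.

Variables (F : R -> R) (k m : R).

Lemma quadratic_Du (u v w : R) :
  Differentiable F ->
  Deriv (fun u0 => quadratic_density F k m u0 v w) u = Deriv F u.
Proof.
  intro HF; pose proof (differentiable_is_derive F u HF) as HFu.
  apply Deriv_is; unfold quadratic_density; auto_derive.
  - exists (Deriv F u); exact HFu.
  - rewrite Rmult_1_l; apply is_derive_unique, HFu.
Qed.

Lemma quadratic_Dv (u v w : R) :
  Deriv (fun v0 => quadratic_density F k m u v0 w) v = - k * v.
Proof. apply Deriv_is; unfold quadratic_density; auto_derive; [easy | field]. Qed.

Lemma quadratic_Dw (u v w : R) :
  Deriv (fun w0 => quadratic_density F k m u v w0) w = m * w.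
Proof. apply Deriv_is; unfold quadratic_density; auto_derive; [easy | field]. Qed.

End QuadraticPartials.

Lemma euler_lagrange_quadratic (F : R -> R) (k m : R) (U : R -> R) (x : R) :
  Differentiable F -> Smooth U ->
  euler_lagrange (quadratic_density F k m) U x
  = Deriv F (U x) + k * Dn 2 U x + m * Dn 4 U x.
Proof.
  intros HF HU; unfold euler_lagrange.
  rewrite (quadratic_Du F k m) by exact HF.
  rewrite (Deriv_ext _ (fun y => - k * Dn 1 U y) x)
    by (intro y; apply quadratic_Dv).
  rewrite (Deriv_scal _ _ _ (HU 1%nat)).
  assert (Hw : (fun y => Deriv (fun w0 => quadratic_density F k m (U y) (Dn 1 U y) w0)
                              (Dn 2 U y)) = (fun y => m * Dn 2 U y)).
  { apply functional_extensionality; intro y; apply quadratic_Dw. }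
  assert (Hw' : Deriv (fun y => m * Dn 2 U y) = (fun y => m * Dn 3 U y)).
  { apply functional_extensionality; intro y; apply (Deriv_scal _ _ _ (HU 2%nat)). }
  change (Dn 2 ?f x) with (Deriv (Deriv f) x).
  rewrite Hw, Hw', (Deriv_scal _ _ _ (HU 3%nat)).
  change (Deriv F (U x) - - k * Dn 2 U x + m * Dn 4 U x
          = Deriv F (U x) + k * Dn 2 U x + m * Dn 4 U x).
  ring.
Qed.

Lemma is_derive_flow (G U V W : R -> R) (k m x g u v w : R) :
  is_derive G (U x) g -> is_derive U x u -> is_derive V x v -> is_derive W x w ->
  is_derive (fun y => G (U y) + k * V y + m * W y) x (g * u + k * v + m * w).
Proof.
  intros HG HU HV HW.
  apply (is_derive_plus (fun y => G (U y) + k * V y) (fun y => m * W y)).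
  - apply (is_derive_plus (fun y => G (U y)) (fun y => k * V y)).
    + rewrite Rmult_comm; exact (is_derive_comp G U x g u HG HU).
    + apply (is_derive_scal V x k v HV).
  - apply (is_derive_scal W x m w HW).
Qed.

Theorem mainTheorem7 (a h : R -> R) (alpha beta : R)
  (Ha : Smooth a)
  (Ha1 : forall u, Dn 1 a u <> 0)
  (Hh0 : Differentiable h)
  (Hh1 : Differentiable (Dn 1 h))
  (Hh2 : forall u, Dn 2 h u = a u) :
  forall (U : R -> R), Smooth U ->
  forall eps x : R,
    Deriv (varder a h alpha beta eps U) x
    = a (U x) * Dn 1 U x + eps ^ 2 * alpha * Dn 3 U x + eps ^ 4 * beta * Dn 5 U x.
Proof.
  intros U HU eps x.
  assert (Hvar : forall y, varder a h alpha beta eps U y =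
            Dn 1 h (U y) + eps ^ 2 * alpha * Dn 2 U y + eps ^ 4 * beta * Dn 4 U y).
  { intro y; rewrite varder_euler_lagrange.
    rewrite (functional_extensionality _ (quadratic_density h (eps ^ 2 * alpha) (eps ^ 4 * beta)))
      by (intro u; do 2 (apply functional_extensionality; intro);
          apply (htilde_quadratic a h alpha beta Ha Ha1 Hh2)).
    now apply euler_lagrange_quadratic. }
  rewrite (Deriv_ext _ _ x Hvar), <- (Hh2 (U x)).
  apply Deriv_is, is_derive_flow.
  - apply differentiable_is_derive, Hh1.
  - apply (smooth_is_derive U 0 x HU).
  - apply (smooth_is_derive U 2 x HU).
  - apply (smooth_is_derive U 4 x HU).
Qed.
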